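(* Let $\mathcal{D}$ be an abstract system of proof notations, $s\ge2$, and let $d\in\mathcal{D}$ be $s$-bounded in $\mathcal{D}$ with height $o(d)=h\ge2$. Then for all $k\ge1$, $\mathsf E^kd$ is $2_{k-1}(2\cdot h)\cdot s$-bounded in $\mathbb{E}(\mathcal{D})$, where $\mathsf E^kd$ denotes $\mathsf E\cdots\mathsf Ed$ with $k$ occurrences of $\mathsf E$.
   Context: An abstract system of proof notations is a set $\mathcal{D}$ with functions $|\cdot|,o(\cdot)\colon\mathcal{D}\to\mathbb{N}\setminus\{0\}$ (size and height) and a relation $\to\subseteq\mathcal{D}\times\mathcal{D}$ such that $d\to d'$ implies $o(d')<o(d)$. The cut-elimination closure $\mathbb{E}(\mathcal{D})$ is the abstract system of formal terms inductively generated by: every $d\in\mathcal{D}$ is in $\mathbb{E}(\mathcal{D})$ (with size and height inherited); if $d,e\in\mathbb{E}(\mathcal{D})$ then $\mathsf{I}d,\ \mathsf{R}de,\ \mathsf{E}d\in\mathbb{E}(\mathcal{D})$ ($\mathsf I,\mathsf R,\mathsf E$ new symbols), with $|\mathsf Id|=|d|+1$, $|\mathsf Rde|=|d|+|e|+1$, $|\mathsf Ed|=|d|+1$, $o(\mathsf Id)=o(d)$, $o(\mathsf Rde)=o(d)+o(e)$, $o(\mathsf Ed)=2^{o(d)}-1$. The relation $\to$ on $\mathbb{E}(\mathcal{D})$ is inductively generated by: $d\to d'$ in $\mathcal{D}$ implies $d\to d'$; $d\to d'$ implies $\mathsf Id\to\mathsf Id'$; $e\to e'$ implies $\mathsf Rde\to\mathsf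 Rde'$; $d\to d'$ implies $\mathsf Ed\to\mathsf Ed'$; $\mathsf Rde\to\mathsf Id$ always; and $d\to d'$ together with $d\to d''$ implies $\mathsf Ed\to\mathsf R(\mathsf Ed')(\mathsf Ed'')$. For an abstract system $\mathcal{X}$ (here $\mathcal{D}$ or $\mathbb{E}(\mathcal{D})$) and $x\in\mathcal{X}$, $x$ is called $t$-bounded in $\mathcal{X}$ if every $x'\in\mathcal{X}$ with $x\to^\ast x'$ (reflexive transitive closure of the relation $\to$ of $\mathcal{X}$) satisfies $|x'|\le t$. Iterated exponentiation: $2_0(x)=x$, $2_{n+1}(x)=2^{2_n(x)}$. *)

From Stdlib Require Import Arith Relations.

Record APN := {
  carrier :> Type;
  size : carrier -> nat;
  height : carrier -> nat;
  size_pos : forall d, 0 < size d;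
  height_pos : forall d, 0 < height d;
  step : carrier -> carrier -> Prop;
  step_height : forall d d', step d d' -> height d' < height d
}.

Inductive Eterm (D : APN) : Type :=
| Ebase : carrier D -> Eterm D
| EI : Eterm D -> Eterm D
| ER : Eterm D -> Eterm D -> Eterm D
| EE : Eterm D -> Eterm D.

Arguments Ebase {D} _.
Arguments EI {D} _.
Arguments ER {D} _ _.
Arguments EE {D} _.

Fixpoint Esize {D : APN} (t : Eterm D) : nat :=
  match t with
  | Ebase d => size D d
  | EI d => Esize d + 1
  | ER d e => Esize d + Esize e + 1
  | EE d => Esize d + 1
  end.

Fixpoint Eheight {D : APN} (t : Eterm D) : nat :=
  match t with
  | Ebase d => height D d
  | EI d => Eheight d
  | ER d e => Eheight d + Eheight e
  | EE d => 2 ^ Eheight d - 1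
  end.

Inductive Estep {D : APN} : Eterm D -> Eterm D -> Prop :=
| Estep_base : forall d d', step D d d' -> Estep (Ebase d) (Ebase d')
| Estep_I : forall d d', Estep d d' -> Estep (EI d) (EI d')
| Estep_R : forall d e e', Estep e e' -> Estep (ER d e) (ER d e')
| Estep_E : forall d d', Estep d d' -> Estep (EE d) (EE d')
| Estep_RI : forall d e, Estep (ER d e) (EI d)
| Estep_ER : forall d d' d'', Estep d d' -> Estep d d'' ->
    Estep (EE d) (ER (EE d') (EE d'')).

Definition bounded_in_D (D : APN) (t : nat) (x : carrier D) : Prop :=
  forall x', clos_refl_trans _ (step D) x x' -> size D x' <= t.

Definition bounded_in_E (D : APN) (t : nat) (x : Eterm D) : Prop :=
  forall x', clos_refl_trans _ (@Estep D) x x' -> Esize x' <= t.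

Definition Eiter {D : APN} (k : nat) (x : Eterm D) : Eterm D :=
  Nat.iter k (@EE D) x.

Fixpoint tower (n x : nat) : nat :=
  match n with
  | 0 => x
  | S n => 2 ^ tower n x
  end.

(* Every reduct of E x is built, in a well-founded way, from pieces E a with a
   a reduct of x: it is either E a itself, or I z, or R (E a) z, where z is again
   such a combination of strictly smaller height.  Measuring by the height m of
   x, this gives size(y) + 1 <= m * (t + 2) for every reduct y of E x when all
   reducts of x have size <= t.  Iterating, with P = 2_(k+1)(h) bounding the
   height of E^(k+1) d, the bound for E^(k+2) d is
   (P - 1) * (2_k(2h) * s + 2) <= (P - 1) * (P + 1) * s <= 2_(k+1)(2h) * s. *)
From Stdlib Require Import Arith Relations Lia.

Lemma pow2_ge_double (c : nat) : 2 * c <= 2 ^ c.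
Proof.
  induction c as [|c IH]; [simpl; lia|].
  destruct c; [simpl; lia|].
  rewrite Nat.pow_succ_r'; lia.
Qed.

Lemma pow2_pos (a : nat) : 1 <= 2 ^ a.
Proof. apply (Nat.pow_le_mono_r 2 0 a); lia. Qed.

Lemma tower_pos (k x : nat) : 1 <= x -> 1 <= tower k x.
Proof. intros Hx; destruct k; simpl; [exact Hx | apply pow2_pos]. Qed.

Lemma tower_double_le_succ (k x : nat) : tower k (2 * x) <= tower (S k) x.
Proof.
  induction k as [|k IH]; simpl; [apply pow2_ge_double|].
  apply Nat.pow_le_mono_r; [lia | exact IH].
Qed.

Lemma double_tower_le (k x : nat) : 1 <= x -> 2 * tower k x <= tower k (2 * x).
Proof.
  intros Hx; induction k as [|k IH]; cbn [tower]; [lia|].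
  pose proof (tower_pos k x Hx).
  rewrite <- Nat.pow_succ_r'.
  apply Nat.pow_le_mono_r; lia.
Qed.

Section Closure.
Variable D : APN.
Notation Ereduct := (clos_refl_trans _ (@Estep D)).

Lemma Eheight_pos (y : Eterm D) : 1 <= Eheight y.
Proof.
  induction y as [d | y IH | y IHy z IHz | y IH]; simpl; try lia.
  - apply height_pos.
  - pose proof (Nat.pow_le_mono_r 2 1 (Eheight y) ltac:(lia) IH); simpl in *; lia.
Qed.

Lemma Eheight_EE (y : Eterm D) : Eheight (EE y) + 1 = 2 ^ Eheight y.
Proof. simpl; pose proof (pow2_pos (Eheight y)); lia. Qed.

Lemma Estep_height (y y' : Eterm D) : Estep y y' -> Eheight y' < Eheight y.
Proof.
  intros H; induction H as [d d' H | | | d d' _ IH | d e | d d' d'' _ IH' _ IH''];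
    simpl; try lia.
  - apply step_height; exact H.
  - pose proof (Nat.pow_lt_mono_r 2 _ _ ltac:(lia) IH).
    pose proof (pow2_pos (Eheight d')); lia.
  - pose proof (Eheight_pos e); lia.
  - destruct (Eheight d) as [|p]; [lia|].
    pose proof (Nat.pow_le_mono_r 2 (Eheight d') p ltac:(lia) ltac:(lia)).
    pose proof (Nat.pow_le_mono_r 2 (Eheight d'') p ltac:(lia) ltac:(lia)).
    pose proof (pow2_pos p).
    rewrite Nat.pow_succ_r'; lia.
Qed.

Lemma Eheight_Eiter_le (k : nat) (x : Eterm D) :
  Eheight (Eiter k x) <= tower k (Eheight x).
Proof.
  induction k as [|k IH]; simpl; [lia|].
  pose proof (Nat.pow_le_mono_r 2 _ _ ltac:(lia) IH); lia.
Qed.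

Lemma Eheight_Eiter_succ_lt (k : nat) (x : Eterm D) :
  Eheight (Eiter (S k) x) < tower (S k) (Eheight x).
Proof.
  change (Eiter (S k) x) with (EE (Eiter k x)).
  pose proof (Eheight_EE (Eiter k x)).
  pose proof (Nat.pow_le_mono_r 2 _ _ ltac:(lia) (Eheight_Eiter_le k x)).
  simpl; lia.
Qed.

Lemma bounded_in_E_mono (t t' : nat) (x : Eterm D) :
  t <= t' -> bounded_in_E D t x -> bounded_in_E D t' x.
Proof. intros Ht Hx y Hy; specialize (Hx y Hy); lia. Qed.

Lemma Ebase_reduct (d : carrier D) (z : Eterm D) :
  Ereduct (Ebase d) z -> exists d', z = Ebase d' /\ clos_refl_trans _ (step D) d d'.
Proof.
  remember (Ebase d) as y eqn:Ey; intros H; revert d Ey.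
  induction H as [y z H | y | y u z _ IH1 _ IH2]; intros d ->.
  - inversion H; subst; eauto using rt_step.
  - eauto using rt_refl.
  - destruct (IH1 d eq_refl) as [d1 [-> H1]].
    destruct (IH2 d1 eq_refl) as [d2 [-> H2]].
    eauto using rt_trans.
Qed.

Lemma bounded_Ebase (s : nat) (d : carrier D) :
  bounded_in_D D s d -> bounded_in_E D s (Ebase d).
Proof.
  intros Hd z Hz.
  destruct (Ebase_reduct d z Hz) as [d' [-> Hd']].
  exact (Hd d' Hd').
Qed.

Inductive EE_shape (x : Eterm D) : nat -> Eterm D -> Prop :=
| shape_E m a :
    Ereduct x a -> Eheight a <= m -> EE_shape x m (EE a)
| shape_RE m m' a z :
    Ereduct x a -> Eheight a <= m' -> EE_shape x m' z -> m' < m ->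
    EE_shape x m (ER (EE a) z)
| shape_I m m' z :
    EE_shape x m' z -> m' < m -> EE_shape x m (EI z).

Lemma EE_shape_step (x : Eterm D) (m : nat) (y y' : Eterm D) :
  EE_shape x m y -> Estep y y' -> EE_shape x m y'.
Proof.
  intros G; revert y'; induction G as [m a Ha Hm | m m' a z Ha Hm' Gz IH Hm
                                       | m m' z Gz IH Hm];
    intros y' St; inversion St; subst.
  - match goal with Hs : Estep a _ |- _ =>
      pose proof (Estep_height _ _ Hs) end.
    apply shape_E; [eapply rt_trans; eauto using rt_step | lia].
  - (* E a -> R (E a') (E a''): the new left factor is bounded by the larger of the two heights. *)
    match goal with H' : Estep a ?a', H'' : Estep a ?a'' |- _ =>
      pose proof (Estep_height _ _ H'); pose proof (Estep_height _ _ H'');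
      apply shape_RE with (m' := max (Eheight a') (Eheight a'')) end;
      [eapply rt_trans; eauto using rt_step | lia | | lia].
    apply shape_E; [eapply rt_trans; eauto using rt_step | lia].
  - eapply shape_RE; eauto.
  - eapply shape_I; [apply shape_E|]; eauto.
  - eapply shape_I; eauto.
Qed.

Lemma EE_shape_reduct (x : Eterm D) (m : nat) (y y' : Eterm D) :
  Ereduct y y' -> EE_shape x m y -> EE_shape x m y'.
Proof.
  intros H; revert m; induction H; intros; eauto using EE_shape_step.
Qed.

Lemma EE_shape_size (x : Eterm D) (t m : nat) (y : Eterm D) :
  bounded_in_E D t x -> EE_shape x m y -> Esize y + 1 <= m * (t + 2).
Proof.
  intros Hx G; induction G as [m a Ha Hm | m m' a z Ha Hm' Gz IH Hm
                               | m m' z Gz IH Hm]; simpl.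
  - specialize (Hx a Ha); pose proof (Eheight_pos a); nia.
  - specialize (Hx a Ha); nia.
  - nia.
Qed.

Lemma bounded_EE (t : nat) (x : Eterm D) :
  bounded_in_E D t x -> bounded_in_E D (Eheight x * (t + 2)) (EE x).
Proof.
  intros Hx y Hy.
  assert (G : EE_shape x (Eheight x) y).
  { eapply EE_shape_reduct; [exact Hy|].
    apply shape_E; [apply rt_refl | lia]. }
  pose proof (EE_shape_size x t _ y Hx G); lia.
Qed.

Lemma bounded_Eiter_succ (s : nat) (d : carrier D) :
  2 <= s -> bounded_in_D D s d ->
  forall k, bounded_in_E D (tower k (2 * height D d) * s) (Eiter (S k) (Ebase d)).
Proof.
  intros Hs Hd k; set (h := height D d).
  pose proof (height_pos D d) as Hh.
  induction k as [|k IH].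
  - apply (bounded_in_E_mono (h * (s + 2))); [simpl; nia|].
    apply bounded_EE, bounded_Ebase, Hd.
  - set (x := Eiter (S k) (Ebase d)) in *.
    set (P := tower (S k) h).
    assert (HxP : Eheight x < P) by apply Eheight_Eiter_succ_lt.
    assert (HtP : tower k (2 * h) <= P) by apply tower_double_le_succ.
    assert (HPP : P * P <= tower (S k) (2 * h)).
    { change (2 ^ tower k h * 2 ^ tower k h <= 2 ^ tower k (2 * h)).
      rewrite <- Nat.pow_add_r; apply Nat.pow_le_mono_r; [lia|].
      pose proof (double_tower_le k h Hh); lia. }
    apply (bounded_in_E_mono (Eheight x * (tower k (2 * h) * s + 2)));
      [| apply bounded_EE, IH].
    apply Nat.le_trans with ((P - 1) * ((P + 1) * s)); [apply Nat.mul_le_mono; nia|].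
    destruct P as [|p]; [lia|].
    replace (S p - 1) with p by lia; nia.
Qed.

End Closure.

Theorem mainTheorem9 (D : APN) (s : nat) (d : carrier D) :
  2 <= s ->
  bounded_in_D D s d ->
  2 <= height D d ->
  forall k : nat, 1 <= k ->
    bounded_in_E D (tower (k - 1) (2 * height D d) * s) (Eiter k (Ebase d)).
Proof.
  (* The bound already holds for height 1. *)
  intros Hs Hd _ [|k] Hk; [lia|].
  replace (S k - 1) with k by lia.
  exact (bounded_Eiter_succ D s d Hs Hd k).
Qed.
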